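(* Let $\Gamma$ be a lattice satisfying the standing assumptions below, and let $M$ be an $X$-type operator of the 3D toric code on $\Gamma$ that is a stabilizer or a logical operator, and whose support $\mathrm{supp}(M)$ (set of faces on which it acts nontrivially) is not a cut set of $\Gamma$. Then each face in $\mathrm{supp}(M)$ lies in the boundary of exactly one volume; that is, $\mathrm{supp}(M)\subseteq\mathcal{F}=\{f\in C_2(\Gamma):|\iota(f)|=1\}$.
   Context: $\Gamma$ is a finite, connected three-dimensional cell complex with edges $C_1(\Gamma)$ (partial edges allowed at the boundary), faces $C_2(\Gamma)$, volumes $C_3(\Gamma)$; $\partial(f)$ denotes the boundary edges of a face, $\partial(\nu)$ the boundary faces of a volume, $\iota(e)$ the set of faces containing edge $e$, $\iota(f)$ the set of volumes having $f$ in their boundary; for a set $A$ of edges, $\iota(A)$ is the symmetric difference of the $\iota(e)$, $e\in A$. Every face lies in the boundary of at most two volumes. Standing assumptions: (L1) $\Gamma$ has no boundaries in its interior, so that every face cycle (a sequence of faces, each lying in exactly two volumes, such that for every volume $\nu$ the faces of $\partial(\nu)$ occur an even number of times in it) equals, as a set mod 2, $\iota(A)$ for some $A\subseteq C_1(\Gamma)$; (L2) the boundary of every face of $\Gamma$ and of its dual $\Gamma^*$ is a closed path or an open path beginning and ending with partial edges; the dual complex is connected. The 3D toric code on $\Gamma$ has one qubit per face and stabilizer group generated by $B_e=\prod_{f\in\iota(e)}Z_f$ and $A_\nu=\prod_{f\in\partial(\nu)}X_f$; a logical operator is a Pauli operator commuting with all stabilizers but not in the stabilizer group (up to phase). A face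 path is a sequence of faces $\rho=(f_1,\dots,f_m)$ with pairwise distinct volumes $\Lambda(\rho)=(\nu_1,\dots,\nu_{m-1})$ such that $f_i,f_{i+1}\in\partial(\nu_i)$. A set of faces $K$ is a cut set of $\Gamma$ if there exist volumes $\nu,\nu'$ such that every face path $\rho=(f_1,\dots,f_m)$ with $f_1\in\partial(\nu)$, $f_m\in\partial(\nu')$ and $\nu,\nu'\notin\Lambda(\rho)$ satisfies $K\cap\rho\neq\emptyset$. *)

From mathcomp Require Import all_boot.
Set Implicit Arguments. Unset Strict Implicit. Unset Printing Implicit Defensive.

Section Complex.
(* Vert: vertices (needed only to express (L2) and connectedness);
   Edge = C_1, Face = C_2, Vol = C_3. *)
Variables (Vert Edge Face Vol : finType).
Variable bde : Edge -> {set Vert}.   (* endpoints of an edge: 1 element = partial edge *)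
Variable bdf : Face -> {set Edge}.
Variable bdv : Vol -> {set Face}.

Definition iota_e (e : Edge) : {set Face} := [set f | e \in bdf f].
Definition iota_f (f : Face) : {set Vol} := [set v | f \in bdv v].

Definition symsum (I T : finType) (A : {set I}) (F : I -> {set T}) : {set T} :=
  [set t | odd #|[set i in A | t \in F i]|].

Definition iota_set (A : {set Edge}) : {set Face} := symsum A iota_e.

Definition Fbd : {set Face} := [set f | #|iota_f f| == 1].

Definition face_cycle (s : seq Face) : Prop :=
  all (fun f => #|iota_f f| == 2) s /\ forall v : Vol, ~~ odd (count [in bdv v] s).
Definition set_mod2 (s : seq Face) : {set Face} := [set f | odd (count_mem f s)].
Definition L1 : Prop :=
  forall s, face_cycle s -> exists A : {set Edge}, set_mod2 s = iota_set A.
End Complex.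

(* Paths in a graph whose edges have endpoint sets given by [ends];
   an edge e with #|ends e| = 1 is partial. *)
Section Paths.
Variables (V E : finType) (ends : E -> {set V}).
(* closed path e_1 .. e_k through vertices v_1 .. v_k, e_i joining v_i and v_{i+1 mod k} *)
Definition closed_path (P : {set E}) : Prop :=
  exists (es : seq E) (vs : seq V),
    [/\ 0 < size es, uniq es, P = [set e in es], size vs = size es &
        all (fun t => (ends t.1 == [set t.2.1; t.2.2]) && (t.2.1 != t.2.2))
            (zip es (zip vs (rot 1 vs)))].
(* open path e_1 .. e_k (k >= 2) through v_1 .. v_(k-1), where e_1 and e_k are
   partial edges with endpoints v_1 and v_(k-1), e_i joining v_(i-1) and v_i *)
Definition open_partial_path (P : {set E}) : Prop :=
  exists (e1 ek : E) (mid : seq E) (v : V) (ws : seq V),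
    let es := e1 :: rcons mid ek in
    [/\ uniq es, P = [set e in es], size ws = size mid,
        ends e1 = [set v] /\ ends ek = [set last v ws] &
        all (fun t => (ends t.1 == [set t.2.1; t.2.2]) && (t.2.1 != t.2.2))
            (zip mid (zip (v :: ws) ws))].
Definition path_bd (P : {set E}) : Prop := closed_path P \/ open_partial_path P.
End Paths.

Section Toric.
Variables (Vert Edge Face Vol : finType).
Variable bde : Edge -> {set Vert}.
Variable bdf : Face -> {set Edge}.
Variable bdv : Vol -> {set Face}.

Definition standing : Prop :=
  [/\
      (forall e, 0 < #|bde e| <= 2),
      (forall f, #|iota_f bdv f| <= 2),
      (* Gamma is connected (its 1-skeleton is connected) and the dual complex
         is connected *)
      (forall u w : Vert, connect [rel a b | [exists e, bde e == [set a; b]]] u w) /\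
      (forall v v' : Vol, connect [rel a b | [exists f, (f \in bdv a) && (f \in bdv b)]] v v'),
      L1 bdf bdv &
      (* (L2) for Gamma: boundary of each face; for Gamma^*: the dual face of an
         edge e has as boundary the dual edges f^* (f in iota(e)), whose endpoints
         are the volumes iota(f) *)
      (forall f, path_bd bde (bdf f)) /\ (forall e, path_bd (iota_f bdv) (iota_e bdf e))].

(* Pauli operators on the face qubits, up to phase: (X-part, Z-part). *)
Definition pauli := ({set Face} * {set Face})%type.
Definition commute (P Q : pauli) : bool :=
  ~~ odd (#|P.1 :&: Q.2| + #|P.2 :&: Q.1|).
(* stabilizer group generated by A_nu = (bd nu, 0) and B_e = (0, iota e), up to phase *)
Definition in_stab (P : pauli) : Prop :=
  exists (Vs : {set Vol}) (Es : {set Edge}),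
    P = (symsum Vs bdv, symsum Es (iota_e bdf)).
Definition logical (P : pauli) : Prop :=
  (forall Q, in_stab Q -> commute P Q) /\ ~ in_stab P.
Definition Xtype (P : pauli) : Prop := P.2 = set0.
Definition supp (P : pauli) : {set Face} := P.1 :|: P.2.

Definition face_path (fs : seq Face) (vs : seq Vol) : Prop :=
  exists (f : Face) (fs' : seq Face),
    [/\ fs = f :: fs', size vs = size fs', uniq vs &
        all (fun t => (t.2.1 \in bdv t.1) && (t.2.2 \in bdv t.1))
            (zip vs (zip (f :: fs') fs'))].
Definition cut_set (K : {set Face}) : Prop :=
  exists nu nu' : Vol,
    forall (f : Face) (fs : seq Face) (vs : seq Vol),
      face_path (f :: fs) vs -> f \in bdv nu -> last f fs \in bdv nu' ->
      nu \notin vs -> nu' \notin vs -> has [in K] (f :: fs).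
End Toric.

From Pilot Require Import Defs.
From mathcomp Require Import all_boot.
From Stdlib Require Import Classical.
Set Implicit Arguments. Unset Strict Implicit. Unset Printing Implicit Defensive.

(* If a face f of supp M lay in two volumes nu and nu', then, supp M not being
   a cut set, some face path from nu to nu' avoids supp M and both volumes; it
   closes up through f to a face cycle s meeting supp M exactly once.  A product
   of A_nu's meets every face cycle in an even number of faces (counted with
   multiplicity), so M is not a stabilizer; by (L1) s is iota(A) mod 2, so B_A
   anticommutes with M, and M is not logical either.  Finally iota(f) is
   nonempty by (L2): f has an edge e, and f^* is an edge of the dual face of e,
   with endpoints iota(f). *)

Lemma count_sum (T : Type) (a : pred T) (s : seq T) : count a s = \sum_(t <- s) a t.
Proof. by rewrite -sumn_count sumnE big_map. Qed.

Lemma odd_sum_odd (I : Type) (r : seq I) (P : pred I) (n : I -> nat) :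
  odd (\sum_(i <- r | P i) odd (n i)) = odd (\sum_(i <- r | P i) n i).
Proof.
rewrite !(big_morph odd oddD (id2 := 0) (erefl false)).
by apply: eq_bigr => i _; rewrite oddb.
Qed.

Lemma card_set_sum (I : finType) (A : {pred I}) (P : pred I) :
  #|[set i in A | P i]| = \sum_(i in A) P i.
Proof.
rewrite -sum1_card (eq_bigl (fun i => (i \in A) && P i)) => [|i]; last by rewrite inE.
by rewrite big_mkcondr; apply: eq_bigr => i _; case: (P i).
Qed.

Lemma odd_count_symsum (I T : finType) (A : {set I}) (F : I -> {set T}) (s : seq T) :
  odd (count [in symsum A F] s) = odd (\sum_(i in A) count [in F i] s).
Proof.
under [in RHS]eq_bigr do rewrite count_sum.
rewrite exchange_big -odd_sum_odd count_sum.
congr odd; apply: eq_bigr => t _.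
by rewrite inE card_set_sum.
Qed.

Lemma odd_card_setI_set_mod2 (T : finType) (K : {set T}) (s : seq T) :
  odd #|K :&: set_mod2 s| = odd (count [in K] s).
Proof.
have -> : K :&: set_mod2 s = [set x in K | odd (count_mem x s)].
  by apply/setP => x; rewrite !inE.
rewrite card_set_sum odd_sum_odd.
under eq_bigr do rewrite count_sum.
rewrite exchange_big count_sum /=; congr odd; apply: eq_bigr => t _.
rewrite big_mkcond (bigD1 t) //= eqxx big1 ?addn0 => [|i /negbTE].
  by case: (t \in K).
by rewrite eq_sym => ->; case: (i \in K).
Qed.

Section PathBoundary.
Variables (V E : finType) (ends : E -> {set V}).

Lemma zip_ends_neq0 (es : seq E) (ps : seq (V * V)) x :
  size es <= size ps ->
  all (fun t => (ends t.1 == [set t.2.1; t.2.2]) && (t.2.1 != t.2.2)) (zip es ps) ->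
  x \in es -> ends x != set0.
Proof.
move=> sz /allP ok; rewrite -(unzip1_zip sz) => /mapP [t /ok /andP [/eqP endt _] ->].
by rewrite endt; apply/set0Pn; exists t.2.1; rewrite !inE eqxx.
Qed.

Lemma path_bd_neq0 P : path_bd ends P -> P != set0.
Proof.
case=> [[[|e es] [vs [//= _ _ -> _ _]]] | [e1 [ek [mid [v [ws [_ -> _ _ _]]]]]]].
  by apply/set0Pn; exists e; rewrite inE mem_head.
by apply/set0Pn; exists e1; rewrite inE mem_head.
Qed.

Lemma path_bd_ends_neq0 P x : path_bd ends P -> x \in P -> ends x != set0.
Proof.
case=> [[es [vs [_ _ -> sz ok]]] | [e1 [ek [mid [v [ws [_ -> sz [end1 endk] ok]]]]]]].
  by rewrite inE; apply: zip_ends_neq0 ok; rewrite size_zip size_rot sz minnn.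
rewrite inE in_cons mem_rcons in_cons => /or3P [/eqP -> | /eqP -> | ].
- by rewrite end1; apply/set0Pn; exists v; rewrite inE.
- by rewrite endk; apply/set0Pn; exists (last v ws); rewrite inE.
by apply: zip_ends_neq0 ok; rewrite size_zip /= sz (minn_idPr (leqnSn _)).
Qed.

End PathBoundary.

Lemma iota_f_neq0 (Vert Edge Face Vol : finType) (bde : Edge -> {set Vert})
    (bdf : Face -> {set Edge}) (bdv : Vol -> {set Face}) f :
  path_bd bde (bdf f) -> (forall e, path_bd (iota_f bdv) (iota_e bdf e)) ->
  iota_f bdv f != set0.
Proof.
move=> /path_bd_neq0 /set0Pn [e fe] dual.
by apply: (path_bd_ends_neq0 (dual e)); rewrite inE.
Qed.

Section FacePaths.
Variables (Face Vol : finType) (bdv : Vol -> {set Face}).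
Hypothesis iota_f_le2 : forall g, #|iota_f bdv g| <= 2.

Lemma iota_f_pair g a b :
  g \in bdv a -> g \in bdv b -> a != b -> iota_f bdv g = [set a; b].
Proof.
move=> ga gb ab; apply/eqP; rewrite eq_sym eqEcard cards2 ab iota_f_le2 andbT.
by apply/subsetP => v; rewrite !inE => /orP [] /eqP ->.
Qed.

Lemma count_bdv_pair g a b v :
  g \in bdv a -> g \in bdv b -> a != b -> (g \in bdv v) = (a == v) + (b == v) :> nat.
Proof.
move=> ga gb ab; have /setP /(_ v) := iota_f_pair ga gb ab; rewrite !inE => ->.
by rewrite ![_ == v]eq_sym; case: (eqVneq v a) => [->|]; rewrite ?(negbTE ab).
Qed.

Lemma face_path_volumes g gs us a b :
  size us = size gs ->
  all (fun t => (t.2.1 \in bdv t.1) && (t.2.2 \in bdv t.1)) (zip us (zip (g :: gs) gs)) ->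
  g \in bdv a -> last g gs \in bdv b -> uniq (a :: rcons us b) ->
  all (fun g => #|iota_f bdv g| == 2) (g :: gs) /\
  forall v, count [in bdv v] (g :: gs) = count_mem v (a :: us) + count_mem v (rcons us b).
Proof.
elim: gs g us a => [|g' gs IH] g [|u us] a //=.
  move=> _ _ ga gb; rewrite andbT inE => ab; split.
    by rewrite (iota_f_pair ga gb ab) cards2 ab.
  by move=> v; rewrite !addn0 (count_bdv_pair v ga gb ab).
move=> [sz] /andP [/andP [gu g'u] steps] ga gsb.
rewrite in_cons negb_or mem_rcons in_cons => /andP [/andP [au _] uniq_u].
have [two cnt] := IH g' us u sz steps g'u gsb uniq_u.
split; first by rewrite (iota_f_pair ga gu au) cards2 au.
move=> v; have /= -> := cnt v.
by rewrite (count_bdv_pair v ga gu au) -!addnA; congr (_ + (_ + _)); rewrite addnCA.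
Qed.

Lemma face_path_close f g gs us a b :
  f \in bdv a -> f \in bdv b -> a != b ->
  face_path bdv (g :: gs) us -> g \in bdv a -> last g gs \in bdv b ->
  a \notin us -> b \notin us -> face_cycle bdv (f :: g :: gs).
Proof.
move=> fa fb ab [_ [_ [[<- <-] sz uniq_us steps]]] ga gsb aus bus.
have uniq_ab : uniq (a :: rcons us b).
  by rewrite /= mem_rcons in_cons negb_or ab aus rcons_uniq bus.
have [two cnt] := face_path_volumes sz steps ga gsb uniq_ab.
split; first by rewrite /= (iota_f_pair fa fb ab) cards2 ab.
move=> v; have /= cnt_v := cnt v.
rewrite /= cnt_v (count_bdv_pair v fa fb ab) -cats1 count_cat /=.
rewrite addn0 !oddD !oddb.
by case: (a == v); case: (b == v); case: (odd (count_mem v us)).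
Qed.

End FacePaths.

Lemma not_cut_set_face_path (Face Vol : finType) (bdv : Vol -> {set Face}) K :
  ~ cut_set bdv K -> forall nu nu' : Vol,
  exists f fs vs, [/\ face_path bdv (f :: fs) vs, f \in bdv nu, last f fs \in bdv nu',
                      nu \notin vs /\ nu' \notin vs & ~~ has [in K] (f :: fs)].
Proof.
move=> not_cut nu nu'; apply: NNPP => no_path; apply: not_cut; exists nu, nu'.
move=> f fs vs fp f_nu last_nu' nu_vs nu'_vs; apply: contraT => avoids.
by case: no_path; exists f, fs, vs.
Qed.

Lemma symsum_set0 (I T : finType) (F : I -> {set T}) : symsum set0 F = set0.
Proof.
apply/setP => t; rewrite !inE (_ : [set i in set0 | _] = set0) ?cards0 //.
by apply/setP => i; rewrite !inE.
Qed.

Theorem lemma5 (Vert Edge Face Vol : finType) (bde : Edge -> {set Vert})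
    (bdf : Face -> {set Edge}) (bdv : Vol -> {set Face}) (M : pauli Face) :
  standing bde bdf bdv ->
  Xtype M ->
  (in_stab bdf bdv M \/ logical bdf bdv M) ->
  ~ cut_set bdv (supp M) ->
  supp M \subset Fbd bdv.
Proof.
move=> [_ iota_f_le2 _ L1_holds [L2_faces L2_dual]] XM stab_or_logical not_cut.
have suppE : supp M = M.1 by rewrite /supp XM setU0.
rewrite suppE in not_cut *; apply/subsetP => f fM.
rewrite inE; apply: contraT => card_ne1.
have /cards2P [nu [nu' [nu_nu' iotaE]]] : #|iota_f bdv f| == 2.
  rewrite eqn_leq iota_f_le2 ltn_neqAle eq_sym card_ne1 card_gt0.
  exact: iota_f_neq0 (L2_faces f) L2_dual.
have f_nu : f \in bdv nu by move/setP/(_ nu): iotaE; rewrite !inE eqxx.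
have f_nu' : f \in bdv nu' by move/setP/(_ nu'): iotaE; rewrite !inE eqxx orbT.
have [g [gs [us [walk g_nu last_nu' [nu_us nu'_us] avoids]]]] :=
  not_cut_set_face_path not_cut nu nu'.
have cycle :=
  face_path_close iota_f_le2 f_nu f_nu' nu_nu' walk g_nu last_nu' nu_us nu'_us.
have odd_M : odd (count [in M.1] (f :: g :: gs)).
  have /eqP count0 : count [in M.1] (g :: gs) == 0 by rewrite eqn0Ngt -has_count.
  by rewrite /= in count0 *; rewrite fM count0.
case: stab_or_logical => [[Vs [Es ME]] | [commutes _]].
  move: odd_M; rewrite ME odd_count_symsum -odd_sum_odd big1 // => v _.
  by case: cycle => _ /(_ v) /negbTE ->.
have [A cycleE] := L1_holds _ cycle.
have B_A : in_stab bdf bdv (set0, iota_set bdf A) by exists set0, A; rewrite symsum_set0.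
have := commutes _ B_A; rewrite /Defs.commute /= setI0 cards0 addn0.
by rewrite -cycleE odd_card_setI_set_mod2 odd_M.
Qed.
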